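(* Let $G\subseteq U(2)$ be a finite unitary reflection group and let $\mathcal R_G=\mathcal S_1\cup\mathcal S_2$ be a partition of its set of reflecting hyperplanes into two disjoint $G$-invariant subsets. Let $E\subseteq\mathbb C^2$ be a bounded $G$-invariant domain containing the origin. For $\delta>0$ and $j=1,2$ define $$E(\mathcal S_j,\delta)=\{(z,w)\in E\times E: d(z,Y)\geq\delta,\ d(w,Y)\geq\delta\ \ \forall Y\in\mathcal R_G\setminus\mathcal S_j\},$$ $$E_{\mathrm{reg}}(\delta)=\{(z,w)\in E\times E: d(z,bE)+d(w,bE)+|g.z-w|\geq\delta\ \ \forall g\in G\},$$ where $d$ denotes Euclidean distance. Then there exists $\delta>0$ such that $$E\times E=E(\mathcal S_1,\delta)\cup E(\mathcal S_2,\delta)\cup E_{\mathrm{reg}}(\delta).$$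
   Context: A reflection is an element of $U(2)$ of finite order whose fixed point set is a complex line (its reflecting hyperplane); a finite unitary reflection group $G$ is a finite subgroup of $U(2)$ generated by reflections, $\mathcal R_G$ is the set of reflecting hyperplanes of its reflections, and $G$ acts on $\mathcal R_G$ by $g.Y=\{g.v: v\in Y\}$. *)

From HB Require Import structures.
From mathcomp Require Import all_boot all_order all_algebra.
From mathcomp Require Import complex.
From mathcomp Require Import boolp classical_sets cardinality reals.
Set Implicit Arguments. Unset Strict Implicit. Unset Printing Implicit Defensive.
Import Order.TTheory GRing.Theory Num.Theory.
Local Open Scope ring_scope.
Local Open Scope classical_set_scope.

Section Defs.
Variable R : realType.

Definition cvec := 'cV[R[i]]_2.

Definition cabs2 (z : R[i]) : R := complex.Re z ^+ 2 + complex.Im z ^+ 2.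

Definition vnorm (v : cvec) : R := Num.sqrt (\sum_(i < 2) cabs2 (v i 0)).
Definition vdist (v w : cvec) : R := vnorm (v - w).

Definition setdist (v : cvec) (A : set cvec) : R := inf [set vdist v y | y in A].

Definition act (g : 'M[R[i]]_2) (v : cvec) : cvec := g *m v.
Definition act_set (g : 'M[R[i]]_2) (Y : set cvec) : set cvec := act g @` Y.

Definition adjoint (g : 'M[R[i]]_2) : 'M[R[i]]_2 := (map_mx (@conjc R) g)^T.
Definition unitary (g : 'M[R[i]]_2) : Prop := g *m adjoint g = 1%:M.

Definition fixset (g : 'M[R[i]]_2) : set cvec := [set v | act g v = v].

Definition cline (Y : set cvec) : Prop :=
  exists u : cvec, u != 0 /\ Y = [set c *: u | c in [set: R[i]]].

Definition reflection (g : 'M[R[i]]_2) : Prop :=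
  [/\ unitary g, exists n : nat, (0 < n)%N /\ g ^+ n = 1%:M & cline (fixset g)].

Definition finite_unitary_group (G : set 'M[R[i]]_2) : Prop :=
  [/\ finite_set G, (forall g, G g -> unitary g), G 1%:M,
      (forall g h, G g -> G h -> G (g *m h)) &
      (forall g, G g -> g \in unitmx /\ G (invmx g))].

Definition generated_by_reflections (G : set 'M[R[i]]_2) : Prop :=
  forall g, G g -> exists s : seq 'M[R[i]]_2,
    (forall r, r \in s -> G r /\ reflection r) /\
    g = foldr (fun r acc => r *m acc) 1%:M s.

Definition finite_unitary_reflection_group (G : set 'M[R[i]]_2) : Prop :=
  finite_unitary_group G /\ generated_by_reflections G.

Definition refl_hyperplanes (G : set 'M[R[i]]_2) : set (set cvec) :=
  [set Y | exists g, [/\ G g, reflection g & Y = fixset g]].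

Definition G_invariant_family (G : set 'M[R[i]]_2) (S : set (set cvec)) : Prop :=
  forall g Y, G g -> S Y -> S (act_set g Y).

Definition G_invariant_set (G : set 'M[R[i]]_2) (E : set cvec) : Prop :=
  forall g v, G g -> E v -> E (act g v).

Definition open_set (A : set cvec) : Prop :=
  forall v, A v -> exists r : R, 0 < r /\ forall w, vdist v w < r -> A w.
Definition closure_set (A : set cvec) : set cvec :=
  [set v | forall e : R, 0 < e -> exists w, A w /\ vdist v w < e].
Definition interior_set (A : set cvec) : set cvec :=
  [set v | exists r : R, 0 < r /\ forall w, vdist v w < r -> A w].
Definition boundary (A : set cvec) : set cvec := closure_set A `\` interior_set A.

Definition connected_set (A : set cvec) : Prop :=
  ~ exists U V : set cvec, [/\ open_set U /\ open_set V, A `<=` U `|` V,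
      A `&` U !=set0, A `&` V !=set0 & A `&` U `&` V = set0].

Definition bounded_set (A : set cvec) : Prop :=
  exists M : R, forall v, A v -> vnorm v <= M.

Definition domain (A : set cvec) : Prop :=
  [/\ A !=set0, open_set A & connected_set A].

Definition E_S (G : set 'M[R[i]]_2) (E : set cvec) (S : set (set cvec)) (delta : R)
  : set (cvec * cvec) :=
  [set p | [/\ E p.1, E p.2 &
     forall Y, refl_hyperplanes G Y -> ~ S Y ->
       delta <= setdist p.1 Y /\ delta <= setdist p.2 Y]].

Definition E_reg (G : set 'M[R[i]]_2) (E : set cvec) (delta : R) : set (cvec * cvec) :=
  [set p | [/\ E p.1, E p.2 &
     forall g, G g ->
       delta <= setdist p.1 (boundary E) + setdist p.2 (boundary E)
                + vdist (act g p.1) p.2]].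

End Defs.

(* Choose r > 0 with B(0, r) in E, so that d(v, bE) >= r - |v|.  Two distinct
   complex lines through 0 are transversal, |z| <= K (d(z, Y1) + d(z, Y2)), and
   as R_G is finite one K works for all pairs.  If (z, w) is in neither
   E(S1, d) nor E(S2, d), one of z, w is d-close to a line of S1 and one is
   d-close to a line of S2.  If moreover |g.z - w| < d, then moving lines by g
   (the S_j are G-invariant, g is an isometry) makes z, w or g.z lie within 2d
   of lines from both families; hence |z| or |w| is at most 3Kd, and its
   distance to bE is at least r - 3Kd = d for d = r / (1 + 3K). *)

From Pilot Require Import Defs.
From HB Require Import structures.
From mathcomp Require Import all_boot all_order all_algebra.
From mathcomp Require Import complex.
From mathcomp Require Import boolp classical_sets cardinality reals.
From mathcomp Require Import ring lra.
Set Implicit Arguments. Unset Strict Implicit. Unset Printing Implicit Defensive.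
Import Order.TTheory GRing.Theory Num.Theory.
Local Open Scope ring_scope.
Local Open Scope classical_set_scope.
Local Open Scope complex_scope.

Local Notation normc := ComplexField.Normc.normc.
Local Notation i0 := (ord0 : 'I_2).
Local Notation i1 := (lift ord0 ord0 : 'I_2).

Section EuclideanNorm.
Variable R : realType.
Implicit Types (a b : R) (c : R[i]) (u v w : cvec R) (g : 'M[R[i]]_2).

Lemma normc_ge0 c : 0 <= normc c.
Proof. by case: c => a b; exact: sqrtr_ge0. Qed.

Lemma normc_sqr c : normc c ^+ 2 = cabs2 c.
Proof. by case: c => a b; rewrite /cabs2 /= sqr_sqrtr // addr_ge0 ?sqr_ge0. Qed.

Lemma normcD c d : normc (c + d) <= normc c + normc d.
Proof. exact: le_normcD. Qed.

Lemma normc_real a : normc a%:C = `|a|.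
Proof. by rewrite /= expr0n addr0 sqrtr_sqr. Qed.

Lemma normc_gt0 c : c != 0 -> 0 < normc c.
Proof.
move=> c0; rewrite lt_def normc_ge0 andbT.
by apply: contra c0 => /eqP/ComplexField.Normc.eq0_normc ->.
Qed.

Lemma cauchy_schwarz2 a0 a1 b0 b1 :
  a0 * b0 + a1 * b1 <= Num.sqrt (a0 ^+ 2 + a1 ^+ 2) * Num.sqrt (b0 ^+ 2 + b1 ^+ 2).
Proof.
rewrite -sqrtrM ?addr_ge0 ?sqr_ge0 //.
apply: le_trans (ler_norm _) _; rewrite -sqrtr_sqr ler_wsqrtr //.
have := sqr_ge0 (a0 * b1 - a1 * b0); nra.
Qed.

Lemma minkowski2 a0 a1 b0 b1 :
  Num.sqrt ((a0 + b0) ^+ 2 + (a1 + b1) ^+ 2) <=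
  Num.sqrt (a0 ^+ 2 + a1 ^+ 2) + Num.sqrt (b0 ^+ 2 + b1 ^+ 2).
Proof.
have := cauchy_schwarz2 a0 a1 b0 b1.
have := sqr_sqrtr (addr_ge0 (sqr_ge0 a0) (sqr_ge0 a1)).
have := sqr_sqrtr (addr_ge0 (sqr_ge0 b0) (sqr_ge0 b1)).
have := sqrtr_ge0 (a0 ^+ 2 + a1 ^+ 2); have := sqrtr_ge0 (b0 ^+ 2 + b1 ^+ 2).
set A := Num.sqrt (a0 ^+ 2 + a1 ^+ 2); set B := Num.sqrt (b0 ^+ 2 + b1 ^+ 2).
move=> B0 A0 B2 A2 cs.
rewrite -(ger0_norm (addr_ge0 A0 B0)) -sqrtr_sqr ler_wsqrtr //; nra.
Qed.

Lemma vnormE v : vnorm v = Num.sqrt (normc (v i0 0) ^+ 2 + normc (v i1 0) ^+ 2).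
Proof. by rewrite /vnorm !big_ord_recl big_ord0 addr0 !normc_sqr. Qed.

Lemma vnorm_ge0 v : 0 <= vnorm v.
Proof. exact: sqrtr_ge0. Qed.

Lemma vnormD u v : vnorm (u + v) <= vnorm u + vnorm v.
Proof.
rewrite !vnormE !mxE; apply: le_trans (minkowski2 _ _ _ _).
rewrite ler_wsqrtr //.
have := normcD (u i0 0) (v i0 0); have := normcD (u i1 0) (v i1 0).
have := normc_ge0 (u i0 0 + v i0 0); have := normc_ge0 (u i1 0 + v i1 0).
have := normc_ge0 (u i0 0); have := normc_ge0 (v i0 0).
have := normc_ge0 (u i1 0); have := normc_ge0 (v i1 0).
nra.
Qed.

Lemma vnormZ c v : vnorm (c *: v) = normc c * vnorm v.
Proof.
rewrite !vnormE !mxE !ComplexField.Normc.normcM !exprMn -mulrDr.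
by rewrite sqrtrM ?sqr_ge0 // sqrtr_sqr ger0_norm // normc_ge0.
Qed.

Lemma vnormN v : vnorm (- v) = vnorm v.
Proof. by rewrite -scaleN1r vnormZ normcN ComplexField.Normc.normc1 mul1r. Qed.

Lemma vdist_ge0 u v : 0 <= vdist u v.
Proof. exact: vnorm_ge0. Qed.

Lemma vdist_triangle u v w : vdist u w <= vdist u v + vdist v w.
Proof. by rewrite /vdist -[u - w](subrKA v); exact: vnormD. Qed.

Lemma cvec_eq u v : u i0 0 = v i0 0 -> u i1 0 = v i1 0 -> u = v.
Proof.
move=> e0 e1; apply/matrixP => i j; rewrite [j]ord1.
by case: (unliftP ord0 i) => [k ->|->] //; rewrite [k]ord1.
Qed.

Lemma vnorm_sqr_mx v : ((map_mx (@conjc R) v)^T *m v) 0 0 = (vnorm v ^+ 2)%:C.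
Proof.
rewrite vnormE sqr_sqrtr ?addr_ge0 ?sqr_ge0 // !normc_sqr rmorphD /=.
rewrite /cabs2 !add_Re2_Im2 !sqr_normc mxE !big_ord_recl big_ord0 addr0 !mxE.
by rewrite [_ * v i0 0]mulrC [_ * v i1 0]mulrC.
Qed.

Lemma unitary_vnorm g v : unitary g -> vnorm (g *m v) = vnorm v.
Proof.
move=> /mulmx1C gU; apply/eqP; rewrite -(eqrXn2 (ltn0Sn 1)) ?vnorm_ge0 //.
rewrite -(inj_eq (@complexI R)) -!vnorm_sqr_mx map_mxM trmx_mul -!mulmxA.
by rewrite [X in _ *m X]mulmxA -/(adjoint g) gU mul1mx.
Qed.

Lemma act_vnorm g v : unitary g -> vnorm (act g v) = vnorm v.
Proof. exact: unitary_vnorm. Qed.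

Lemma act_vdist g u v : unitary g -> vdist (act g u) (act g v) = vdist u v.
Proof. by move=> gU; rewrite /vdist /act -mulmxBr unitary_vnorm. Qed.

End EuclideanNorm.

Section Transversality.
Variable R : realType.
Implicit Types (c : R[i]) (u v z : cvec R) (Y : set (cvec R)).

Definition det2 u v : R[i] := u i0 0 * v i1 0 - u i1 0 * v i0 0.

Lemma normc_det2_le u v : normc (det2 u v) <= vnorm u * vnorm v.
Proof.
rewrite /det2 !vnormE; apply: le_trans (normcD _ _) _.
rewrite normcN !ComplexField.Normc.normcM.
apply: le_trans (cauchy_schwarz2 _ _ (normc (v i1 0)) (normc (v i0 0))) _.
by rewrite [X in _ * Num.sqrt X]addrC.
Qed.

Lemma det2_eq0_scale u v : u != 0 -> det2 u v = 0 -> exists c, v = c *: u.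
Proof.
move=> u0 /eqP; rewrite subr_eq0 => /eqP D.
have [u00|u0n0] := eqVneq (u i0 0) 0.
  have u1n0 : u i1 0 != 0.
    by apply: contra u0 => /eqP u10; apply/eqP/cvec_eq; rewrite mxE.
  exists (v i1 0 / u i1 0); apply: cvec_eq; rewrite mxE ?divfK //.
  move: D; rewrite u00 mul0r => /esym/eqP; rewrite mulf_eq0 (negbTE u1n0) /=.
  by move=> /eqP ->; rewrite mulr0.
exists (v i0 0 / u i0 0); apply: cvec_eq; rewrite mxE ?divfK //.
by apply: (mulIf u0n0); rewrite mulrAC divfK // [v i0 0 * _]mulrC -D mulrC.
Qed.

Definition cspan u : set (cvec R) := [set c *: u | c in [set: R[i]]].

Lemma cspanZ c u : c != 0 -> cspan (c *: u) = cspan u.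
Proof.
move=> c0; apply/seteqP; split => _ [d _ <-].
  by exists (d * c) => //; rewrite scalerA.
by exists (d / c) => //; rewrite scalerA divfK.
Qed.

Definition transversal (K : R) Y1 Y2 :=
  forall z y1 y2, Y1 y1 -> Y2 y2 -> vnorm z <= K * (vdist z y1 + vdist z y2).

Lemma transversal_le K K' Y1 Y2 :
  K <= K' -> transversal K Y1 Y2 -> transversal K' Y1 Y2.
Proof.
move=> KK' tK z y1 y2 Yy1 Yy2; apply: le_trans (tK z y1 y2 Yy1 Yy2) _.
by rewrite ler_wpM2r // addr_ge0 ?vdist_ge0.
Qed.

(* Cramer's rule: [det2 u1 u2 *: z] is a combination of [u1] and [u2] whose
   coefficients are determinants of [u_j] against [z - y_i]. *)
Lemma cspan_transversal u1 u2 : u1 != 0 -> u2 != 0 -> cspan u1 <> cspan u2 ->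
  exists2 K, 0 <= K & transversal K (cspan u1) (cspan u2).
Proof.
move=> u1n0 u2n0 span12; set D := det2 u1 u2.
have D0 : 0 < normc D.
  apply: normc_gt0; apply/eqP => /(det2_eq0_scale u1n0) [c u2E]; apply: span12.
  have c0 : c != 0 by apply: contra u2n0 => /eqP c0; rewrite u2E c0 scale0r.
  by rewrite u2E cspanZ.
set P := vnorm u1 * vnorm u2.
exists (P / normc D); first by rewrite divr_ge0 ?mulr_ge0 ?vnorm_ge0 ?ltW.
move=> z _ _ [c1 _ <-] [c2 _ <-].
have zE : D *: z = det2 (z - c2 *: u2) u2 *: u1 + det2 u1 (z - c1 *: u1) *: u2.
  by apply: cvec_eq; rewrite /D /det2 !mxE; ring.
rewrite mulrAC ler_pdivlMr // mulrC -vnormZ zE.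
apply: le_trans (vnormD _ _) _; rewrite !vnormZ /vdist.
have := normc_det2_le (z - c2 *: u2) u2; have := normc_det2_le u1 (z - c1 *: u1).
have := vnorm_ge0 u1; have := vnorm_ge0 u2.
have := vnorm_ge0 (z - c1 *: u1); have := vnorm_ge0 (z - c2 *: u2).
rewrite /P; nra.
Qed.

Lemma cline_transversal Y1 Y2 : cline Y1 -> cline Y2 -> Y1 <> Y2 ->
  exists2 K, 0 <= K & transversal K Y1 Y2.
Proof. by move=> [u1 [u1n0 ->]] [u2 [u2n0 ->]]; exact: cspan_transversal. Qed.

End Transversality.

Section SetDistance.
Variable R : realType.
Implicit Types (v : cvec R) (A : set (cvec R)).

Lemma setdist_ge0 v A : 0 <= setdist v A.
Proof.
have [[y Ay]|/set0P/negP/negPn/eqP ->] := pselect (A !=set0).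
  apply: lb_le_inf; first by exists (vdist v y), y.
  by move=> _ [w _ <-]; exact: vdist_ge0.
by rewrite /setdist image_set0 inf0.
Qed.

Lemma setdist_lt v A e : A !=set0 -> setdist v A < e ->
  exists2 y, A y & vdist v y < e.
Proof.
move=> [y Ay] /inf_lt []; first by exists (vdist v y), y.
by move=> _ [w Aw <-]; exists w.
Qed.

Lemma setdist_ge v A m : A !=set0 -> (forall y, A y -> m <= vdist v y) ->
  m <= setdist v A.
Proof.
move=> [y Ay] mA; apply: lb_le_inf; first by exists (vdist v y), y.
by move=> _ [w Aw <-]; exact: mA.
Qed.

End SetDistance.

Section Boundary.
Variable R : realType.
Implicit Types (E : set (cvec R)) (v : cvec R).

Let ray (t : R) : cvec R := t%:C *: delta_mx i0 0.

Let vnorm_ray t : vnorm (ray t) = `|t|.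
Proof.
rewrite /ray vnormZ normc_real vnormE !mxE /=.
by rewrite !(expr1n, expr0n, addr0, sqrtr0, sqrtr1) /= !(expr0n, addr0, sqrtr0, sqrtr1, mulr1).
Qed.

Let vdist_ray s t : vdist (ray s) (ray t) = `|s - t|.
Proof. by rewrite /vdist /ray -scalerBl -rmorphB vnorm_ray. Qed.

(* Nonemptiness matters, as [setdist v set0 = inf set0 = 0].  The boundary
   point is found on the ray through [delta_mx i0 0], at the supremum of the
   [t] such that the segment [[0, t]] stays in [E]. *)
Lemma boundary_neq0 E : open_set E -> bounded_set E -> E 0 -> boundary E !=set0.
Proof.
move=> openE [M EM] E0.
pose A := [set t : R | 0 <= t /\ forall s, 0 <= s -> s <= t -> E (ray s)].
have A0 : A 0.
  split=> // s s0 s_le0; suff -> : s = 0 by rewrite /ray scale0r.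
  by apply/eqP; rewrite eq_le s_le0 s0.
have supA : has_sup A.
  split; first by exists 0.
  exists M => t [t0 At]; have := EM _ (At t t0 (lexx t)).
  by rewrite vnorm_ray ger0_norm.
have ubA := sup_upper_bound supA; set t := sup A in ubA *.
have segE s : 0 <= s -> s < t -> E (ray s).
  move=> s0 st; have ts0 : 0 < t - s by rewrite subr_gt0.
  have [u [_ Au] ltsu] := sup_adherent ts0 supA.
  by apply: Au => //; apply: ltW; rewrite opprB addrC subrK in ltsu.
exists (ray t); split.
  move=> e e0; have [u [u0 Au] ltu] := sup_adherent e0 supA.
  exists (ray u); split; first exact: Au.
  rewrite vdist_ray ger0_norm ?subr_ge0; last exact: ubA.
  by move: ltu; rewrite -/t; lra.
move=> [rho [rho0 ballE]].
have : A (t + rho / 2).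
  split; first by rewrite addr_ge0 ?ubA // divr_ge0 // ltW.
  move=> s s0 le_s; have [/(segE _ s0) //|le_ts] := ltP s t.
  by apply: ballE; rewrite vdist_ray distrC ger0_norm ?subr_ge0 //; lra.
by move/ubA; lra.
Qed.

Lemma boundary_vnorm_ge E r : open_set E -> (forall w, vdist 0 w < r -> E w) ->
  forall b, boundary E b -> r <= vnorm b.
Proof.
move=> openE ballE b [_ not_int]; rewrite leNgt; apply/negP => lt_br.
by apply: not_int; apply: openE; apply: ballE; rewrite /vdist sub0r vnormN.
Qed.

Lemma setdist_boundary_ge E r : open_set E -> bounded_set E -> E 0 ->
  (forall w, vdist 0 w < r -> E w) -> forall v, r - vnorm v <= setdist v (boundary E).
Proof.
move=> openE bE E0 ballE v; apply: setdist_ge; first exact: boundary_neq0.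
move=> b /(boundary_vnorm_ge openE ballE) le_rb.
have := vdist_triangle 0 v b; rewrite /vdist !sub0r !vnormN; lra.
Qed.

End Boundary.

Section ReflectingHyperplanes.
Variable R : realType.
Implicit Types (G : set 'M[R[i]]_2) (Y : set (cvec R)).

Lemma finite_uniform_bound (T : eqType) (A : set T) (P : T -> R -> Prop) :
  finite_set A -> (forall x K K', K <= K' -> P x K -> P x K') ->
  (forall x, A x -> exists2 K, 0 <= K & P x K) ->
  exists2 K, 0 <= K & forall x, A x -> P x K.
Proof.
move=> /finite_seqP [s ->] P_le; elim: s => [|x s IHs] PA; first by exists 0.
have [Kx Kx0 PKx] := PA x (mem_head x s).
have [Ks Ks0 PKs] : exists2 K, 0 <= K & forall y, y \in s -> P y K.
  by apply: IHs => y ys; apply: PA; rewrite /= in_cons ys orbT.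
exists (Kx + Ks) => [|y]; first exact: addr_ge0.
rewrite /= in_cons => /orP[/eqP ->|ys].
  by apply: P_le PKx; rewrite lerDl.
by apply: P_le (PKs y ys); rewrite lerDr.
Qed.

Lemma refl_hyperplane_cline G Y : refl_hyperplanes G Y -> cline Y.
Proof. by move=> [g [_ [_ _ gline] ->]]. Qed.

Lemma cline0 Y : cline Y -> Y 0.
Proof. by move=> [u [_ ->]]; exists 0; rewrite ?scale0r. Qed.

Lemma refl_hyperplanes_finite G : finite_set G -> finite_set (refl_hyperplanes G).
Proof.
move=> finG; apply: (sub_finite_set _ (finite_image (@Defs.fixset R) finG)).
by move=> _ [g [Gg _ ->]]; exists g.
Qed.

Lemma refl_hyperplanes_transversal G : finite_set G ->
  exists2 K, 0 <= K & forall Y1 Y2, refl_hyperplanes G Y1 ->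
    refl_hyperplanes G Y2 -> Y1 <> Y2 -> transversal K Y1 Y2.
Proof.
move=> /refl_hyperplanes_finite finRG.
pose pairs := [set p | [/\ refl_hyperplanes G p.1, refl_hyperplanes G p.2 & p.1 <> p.2]].
have finP : finite_set pairs.
  by apply: (sub_finite_set _ (finite_setX finRG finRG)) => p [].
have transP p : pairs p -> exists2 K, 0 <= K & transversal K p.1 p.2.
  move=> [/refl_hyperplane_cline line1 /refl_hyperplane_cline line2 p12].
  exact: cline_transversal.
have [K K0 transK] := finite_uniform_bound finP
  (fun p K K' => @transversal_le R K K' p.1 p.2) transP.
by exists K => // Y1 Y2 RY1 RY2 Y12; exact: (transK (Y1, Y2)).
Qed.

End ReflectingHyperplanes.

Section NearHyperplanes.
Variable R : realType.
Implicit Types (S : set (set (cvec R))) (d e : R) (v w : cvec R) (g : 'M[R[i]]_2).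

Definition near_family S d v := exists Y y, [/\ S Y, Y y & vdist v y < d].

Lemma not_E_S G E S d z w : E z -> E w -> ~ E_S G E S d (z, w) ->
  near_family (refl_hyperplanes G `\` S) d z \/
  near_family (refl_hyperplanes G `\` S) d w.
Proof.
move=> Ez Ew notES; apply: contrapT => /not_orP[far_z far_w].
apply: notES; split => // Y RY notSY /=.
have Yn0 : Y !=set0 by exists 0; exact: cline0 (refl_hyperplane_cline RY).
split; rewrite leNgt; apply/negP => /(setdist_lt Yn0) [y Yy lt_y].
  by apply: far_z; exists Y, y.
by apply: far_w; exists Y, y.
Qed.

Lemma near_family_act G S d v g : G g -> unitary g -> G_invariant_family G S ->
  near_family S d v -> near_family S d (act g v).
Proof.
move=> Gg gU invS [Y [y [SY Yy lt_y]]].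
by exists (act_set g Y), (act g y); split; [exact: invS | exists y | rewrite act_vdist].
Qed.

Lemma near_family_shift S d e v w : vdist v w < e ->
  near_family S d w -> near_family S (e + d) v.
Proof.
move=> lt_vw [Y [y [SY Yy lt_y]]]; exists Y, y; split => //.
by apply: le_lt_trans (vdist_triangle v w y) _; exact: ltrD.
Qed.

Lemma vnorm_le_near_family K S1 S2 d1 d2 v :
  (forall Y1 Y2, S1 Y1 -> S2 Y2 -> transversal K Y1 Y2) -> 0 <= K ->
  near_family S1 d1 v -> near_family S2 d2 v -> vnorm v <= K * (d1 + d2).
Proof.
move=> trans12 K0 [Y1 [y1 [SY1 Yy1 lt1]]] [Y2 [y2 [SY2 Yy2 lt2]]].
apply: le_trans (trans12 _ _ SY1 SY2 v y1 y2 Yy1 Yy2) _.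
by rewrite ler_wpM2l // lerD // ltW.
Qed.

End NearHyperplanes.

Section Splitting.
Variable R : realType.
Variables (G : set 'M[R[i]]_2) (S1 S2 : set (set (cvec R))) (K : R).
Hypotheses (unitaryG : forall g, G g -> unitary g)
  (invS1 : G_invariant_family G S1) (invS2 : G_invariant_family G S2)
  (K0 : 0 <= K) (trans12 : forall Y1 Y2, S1 Y1 -> S2 Y2 -> transversal K Y1 Y2).

Lemma vnorm_le_near_orbit g d z w : G g -> vdist (act g z) w < d ->
  near_family S1 d z \/ near_family S1 d w ->
  near_family S2 d z \/ near_family S2 d w ->
  vnorm z <= 3 * K * d \/ vnorm w <= 3 * K * d.
Proof.
move=> Gg lt_gzw near1 near2; have gU := unitaryG Gg.
have d0 : 0 <= d by apply: le_trans (vdist_ge0 _ _) (ltW lt_gzw).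
have Kd0 : 0 <= K * d by rewrite mulr_ge0.
have near_act S := @near_family_act R G S d z g Gg gU.
have near_shift S := @near_family_shift R S d d (act g z) w lt_gzw.
have bound := vnorm_le_near_family trans12 K0.
case: near1 => [n1z|n1w]; case: near2 => [n2z|n2w].
- by left; have := bound _ _ _ n1z n2z; nra.
- left; rewrite -(act_vnorm z gU).
  by have := bound _ _ _ (near_act _ invS1 n1z) (near_shift _ n2w); nra.
- left; rewrite -(act_vnorm z gU).
  by have := bound _ _ _ (near_shift _ n1w) (near_act _ invS2 n2z); nra.
- by right; have := bound _ _ _ n1w n2w; nra.
Qed.

End Splitting.

Theorem lemma6p1 (R : realType) (G : set 'M[R[i]]_2)
  (S1 S2 : set (set (cvec R))) (E : set (cvec R)) :
  finite_unitary_reflection_group G ->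
  S1 `|` S2 = refl_hyperplanes G ->
  S1 `&` S2 = set0 ->
  G_invariant_family G S1 ->
  G_invariant_family G S2 ->
  domain E -> bounded_set E -> G_invariant_set G E -> E 0 ->
  exists delta : R, 0 < delta /\
    [set p | E p.1 /\ E p.2] =
      E_S G E S1 delta `|` E_S G E S2 delta `|` E_reg G E delta.
Proof.
move=> [[finG unitaryG _ _ _] _] S12 S1S2 invS1 invS2 [_ openE _] bE _ E0.
have [r [r0 ballE]] := openE 0 E0.
have [K K0 transK] := refl_hyperplanes_transversal finG.
have RS1 : refl_hyperplanes G `\` S1 = S2 by rewrite -S12 setUKD // S1S2.
have RS2 : refl_hyperplanes G `\` S2 = S1 by rewrite -S12 setUDK // setIC S1S2.
have trans12 Y1 Y2 : S1 Y1 -> S2 Y2 -> transversal K Y1 Y2.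
  move=> SY1 SY2; apply: transK; rewrite -?S12; [by left | by right |].
  move=> Y12; suff : (S1 `&` S2) Y1 by rewrite S1S2.
  by split; rewrite // Y12.
have K3 : 0 < 1 + 3 * K by lra.
pose d := r / (1 + 3 * K); have d0 : 0 < d by rewrite divr_gt0.
have dE : d * (1 + 3 * K) = r by rewrite divfK // gt_eqF.
have far v : vnorm v <= 3 * K * d -> d <= setdist v (boundary E).
  move=> small_v; apply: le_trans (setdist_boundary_ge openE bE E0 ballE v).
  by rewrite -dE; nra.
exists d; split => //; apply/seteqP; split => [[z w] /= [Ez Ew]|p]; last first.
  by case=> [[]|] [].
have [|notES1] := pselect (E_S G E S1 d (z, w)); first by left; left.
have [|notES2] := pselect (E_S G E S2 d (z, w)); first by left; right.
right; split => // g Gg /=.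
have sz0 := setdist_ge0 z (boundary E); have sw0 := setdist_ge0 w (boundary E).
have gzw0 := vdist_ge0 (act g z) w.
have [|lt_gzw] := leP d (vdist (act g z) w); first lra.
move: (not_E_S Ez Ew notES1) (not_E_S Ez Ew notES2); rewrite RS1 RS2 => near2 near1.
have := vnorm_le_near_orbit unitaryG invS1 invS2 K0 trans12 Gg lt_gzw near1 near2.
by case=> /far; lra.
Qed.
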